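(* Let $\mathscr G=(\mathscr V,\mathscr E)$ be a finite connected graph with $N$ vertices and $M\ge0$ an integer. The uniform reshuffling model $(X_t)$ on $\mathscr C_{N,M}$ has a unique stationary distribution $\pi_X$, and $$\lim_{t\to\infty}P_\eta(X_t=\xi)=\pi_X(\xi)\quad\text{for all }\xi,\eta\in\mathscr C_{N,M},$$ where $P_\eta$ denotes the law of the process started from $X_0=\eta$.
   Context: $\mathscr C_{N,M}$ is the set of maps $\xi:\mathscr V\to\mathbb N$ with $\sum_x\xi(x)=M$. The uniform reshuffling model is the discrete-time Markov chain on $\mathscr C_{N,M}$: at each step an edge $(x,y)\in\mathscr E$ is chosen uniformly at random, $U$ is drawn uniformly from $\{0,1,\dots,X_t(x)+X_t(y)\}$, and $X_{t+1}(x)=U$, $X_{t+1}(y)=X_t(x)+X_t(y)-U$, $X_{t+1}(z)=X_t(z)$ for $z\notin\{x,y\}$. *)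

From HB Require Import structures.
From mathcomp Require Import all_boot all_order all_algebra.
From mathcomp Require Import all_classical all_reals all_analysis.
Set Implicit Arguments. Unset Strict Implicit. Unset Printing Implicit Defensive.
Import Order.TTheory GRing.Theory Num.Theory.
Local Open Scope ring_scope.

(* C_{N,M}: configurations xi : V -> nat with total mass M.  Each value is
   at most M, so we store it in 'I_M.+1 to get a finite type. *)
Definition config (V : finType) (M : nat) :=
  {f : {ffun V -> 'I_M.+1} | (\sum_(x : V) (f x : nat))%N == M}.

Definition cval (V : finType) (M : nat) (xi : config V M) (v : V) : nat :=
  nat_of_ord (sval xi v).

Definition simple_graph (V : finType) (e : rel V) : Prop :=
  symmetric e /\ irreflexive e.
Definition connected_graph (V : finType) (e : rel V) : Prop :=
  forall x y : V, connect e x y.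

Definition edges (V : finType) (e : rel V) : {set V * V} :=
  [set p | e p.1 p.2].

Definition upd (V : finType) (f : V -> nat) (x y : V) (u : nat) : V -> nat :=
  fun z => if z == x then u else if z == y then (f x + f y - u)%N else f z.

Definition reshuffle_kernel (R : realType) (V : finType) (e : rel V) (M : nat)
  (xi xi' : config V M) : R :=
  (#|edges e|%:R)^-1 *
  \sum_(p in edges e)
    \sum_(0 <= u < (cval xi p.1 + cval xi p.2).+1)
      ((cval xi p.1 + cval xi p.2).+1%:R)^-1 *
      (if [forall v, cval xi' v == upd (cval xi) p.1 p.2 u v] then 1 else 0).

Fixpoint law_at (R : realType) (V : finType) (e : rel V) (M : nat)
  (t : nat) (eta xi : config V M) : R :=
  match t with
  | 0 => if eta == xi then 1 else 0
  | t'.+1 => \sum_(zeta : config V M)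
               law_at R e t' eta zeta * reshuffle_kernel R e zeta xi
  end.

Definition is_stationary (R : realType) (V : finType) (e : rel V) (M : nat)
  (pi : config V M -> R) : Prop :=
  (forall xi, 0 <= pi xi) /\ \sum_(xi : config V M) pi xi = 1 /\
  (forall xi', \sum_(xi : config V M) pi xi * reshuffle_kernel R e xi xi' = pi xi').

(* The kernel K of the reshuffling chain is symmetric (a step and its reverse
   use the same edge and see the same total on it), so it is doubly stochastic
   and the uniform distribution is stationary.  It has positive diagonal, and it
   is irreducible: sliding whole piles along paths of the graph brings every
   configuration to the one with all M particles on a fixed vertex z.  Hence
   K^n(a, z) >= d > 0 for some n and all a (Doeblin's condition), and each
   application of K^n shrinks the oscillation of a function by the factor 1 - d.
   So K^t f converges to a constant, which is the uniform mass when f is a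
   probability; a stationary distribution is its own limit, hence uniform. *)

From HB Require Import structures.
From mathcomp Require Import all_boot all_order all_algebra.
From mathcomp Require Import all_classical all_reals all_analysis.
From mathcomp Require Import ring lra zify.
Import Order.TTheory GRing.Theory Num.Theory.
Import numFieldNormedType.Exports.
Set Implicit Arguments.
Unset Strict Implicit.
Unset Printing Implicit Defensive.
Local Open Scope classical_set_scope.
Local Open Scope ring_scope.

Lemma card_inv_between (R : realFieldType) (T : finType) (g : T -> R) lo hi :
  (forall x, lo <= g x <= hi) -> \sum_x g x = 1 -> (0 < #|T|)%N ->
  lo <= (#|T|%:R)^-1 <= hi.
Proof.
move=> gb gs T0.
have c0 : 0 < (#|T|%:R : R) by rewrite ltr0n.
have lo_le : \sum_(x : T) lo <= 1 by rewrite -gs; apply: ler_sum => x _; case/andP: (gb x).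
have hi_ge : 1 <= \sum_(x : T) hi by rewrite -gs; apply: ler_sum => x _; case/andP: (gb x).
rewrite sumr_const -mulr_natr in lo_le; rewrite sumr_const -mulr_natr in hi_ge.
by rewrite -[_^-1]mul1r ler_pdivlMr // ler_pdivrMr // lo_le hi_ge.
Qed.

Lemma exists_expr_le (R : archiRealFieldType) (x eps : R) : 0 <= x < 1 -> 0 < eps ->
  exists k, x ^+ k <= eps.
Proof.
move=> /andP[x0 x1] e0.
have x_norm : `|x| < 1 by rewrite ger0_norm.
have /cvgrPdist_le /(_ eps e0) [N _ HN] := cvg_expr x_norm.
exists N; have := HN N (leqnn N).
by rewrite /= sub0r normrN ger0_norm // exprn_ge0.
Qed.

Section StochasticKernel.
Variables (R : realType) (T : finType) (K : T -> T -> R).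
Hypothesis K_ge0 : forall a b, 0 <= K a b.
Hypothesis K_row1 : forall a, \sum_b K a b = 1.

Definition kapply (f : T -> R) : T -> R := fun a => \sum_b K a b * f b.

Lemma kapply_ge0 f : (forall x, 0 <= f x) -> forall a, 0 <= kapply f a.
Proof. by move=> f0 a; apply: sumr_ge0 => b _; apply: mulr_ge0. Qed.

Lemma iter_kapply_ge0 k f : (forall x, 0 <= f x) -> forall a, 0 <= iter k kapply f a.
Proof. by elim: k => [//|k IH] f0; apply: kapply_ge0; apply: IH. Qed.

Lemma kapply_affine f (c d : R) :
  kapply (fun x => c + d * f x) = fun x => c + d * kapply f x.
Proof.
apply: funext => a; rewrite /kapply.
under eq_bigr do rewrite mulrDr mulrCA.
by rewrite big_split /= -mulr_suml K_row1 mul1r -mulr_sumr.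
Qed.

Lemma iter_kapply_affine k f (c d : R) :
  iter k kapply (fun x => c + d * f x) = fun x => c + d * iter k kapply f x.
Proof. by elim: k => [//|k IH]; rewrite !iterS IH kapply_affine. Qed.

Lemma iter_kapply_subr k f c :
  iter k kapply (fun x => f x - c) = fun x => iter k kapply f x - c.
Proof.
have -> : (fun x => f x - c) = (fun x => - c + 1 * f x) by apply: funext => x; ring.
by rewrite iter_kapply_affine; apply: funext => x; ring.
Qed.

Lemma iter_kapply_rsubr k f c :
  iter k kapply (fun x => c - f x) = fun x => c - iter k kapply f x.
Proof.
have -> : (fun x => c - f x) = (fun x => c + (-1) * f x) by apply: funext => x; ring.
by rewrite iter_kapply_affine; apply: funext => x; ring.
Qed.

Lemma iter_kapply_bounds k f lo hi : (forall x, lo <= f x <= hi) ->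
  forall a, lo <= iter k kapply f a <= hi.
Proof.
move=> fb a.
have f_lo x : 0 <= f x - lo by rewrite subr_ge0; case/andP: (fb x).
have f_hi x : 0 <= hi - f x by rewrite subr_ge0; case/andP: (fb x).
have := iter_kapply_ge0 k f_lo a; have := iter_kapply_ge0 k f_hi a.
by rewrite iter_kapply_subr iter_kapply_rsubr /= !subr_ge0 => -> ->.
Qed.

(* [minorizes k c a b] says that [K^k(a, b) >= c], phrased through the action of
   [K^k] on nonnegative functions. *)
Definition minorizes k c a b :=
  forall f, (forall x, 0 <= f x) -> c * f b <= iter k kapply f a.

Definition kreach k a b := exists2 c, 0 < c & minorizes k c a b.

Definition kedge : rel T := fun a b => 0 < K a b.

Lemma kreach0 a : kreach 0 a a.
Proof. by exists 1 => // f _; rewrite mul1r. Qed.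

Lemma kreach1 a b : kedge a b -> kreach 1 a b.
Proof.
move=> Kab; exists (K a b) => // f f0; rewrite /= /kapply (bigD1 b) //=.
by rewrite lerDl; apply: sumr_ge0 => x _; apply: mulr_ge0.
Qed.

Lemma kreach_trans k1 k2 a b c :
  kreach k1 a b -> kreach k2 b c -> kreach (k1 + k2) a c.
Proof.
move=> [c1 c1_gt0 H1] [c2 c2_gt0 H2]; exists (c1 * c2); first exact: mulr_gt0.
move=> f f0; rewrite iterD; apply: le_trans (H1 _ (iter_kapply_ge0 k2 f0)).
by rewrite -mulrA ler_pM2l //; apply: H2.
Qed.

Lemma kreach_connect a b : connect kedge a b -> exists k, kreach k a b.
Proof.
move=> /connectP[p]; elim: p a => [|c p IH] a /=.
  by move=> _ ->; exists 0%N; apply: kreach0.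
move=> /andP[ac pc] bl; have [k Hk] := IH c pc bl.
by exists (1 + k)%N; apply: kreach_trans Hk; apply: kreach1.
Qed.

Hypothesis K_diag_gt0 : forall a, 0 < K a a.

Lemma kreach_leq k k' a b : (k <= k')%N -> kreach k a b -> kreach k' a b.
Proof.
move=> /subnK <-; elim: (k' - k)%N => [//|j IH] /IH H.
by rewrite addSn -add1n; apply: kreach_trans H; apply: kreach1; apply: K_diag_gt0.
Qed.

Lemma uniform_minorization z : (forall a, connect kedge a z) ->
  exists n, exists2 d, 0 < d & forall a, minorizes n d a z.
Proof.
move=> to_z.
have [kf Hk] := choice (fun a => kreach_connect (to_z a)).
pose n := (\max_a kf a)%N.
have Hn a : kreach n a z by apply: kreach_leq (Hk a); apply: leq_bigmax.
have [cf Hc] : {cf : T -> R & forall a, 0 < cf a /\ minorizes n (cf a) a z}.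
  apply: (@choice _ _ (fun a c => 0 < c /\ minorizes n c a z)) => a.
  by have [c c_gt0 Hc] := Hn a; exists c.
exists n, (\big[Order.min/1]_a cf a).
  by rewrite lt_bigmin // => a _; have [] := Hc a.
move=> a f f0; have [_ Ha] := Hc a; apply: le_trans (Ha f f0).
by rewrite ler_wpM2r // bigmin_le.
Qed.

Hypothesis K_sym : forall a b, K a b = K b a.

Lemma sum_iter_kapply k f : \sum_a iter k kapply f a = \sum_a f a.
Proof.
elim: k => [//|k <-]; rewrite /= {1}/kapply exchange_big /=; apply: eq_bigr => b _.
by rewrite -mulr_suml (eq_bigr (K b)) ?K_row1 ?mul1r // => a _; rewrite K_sym.
Qed.

Section Doeblin.
Variables (n : nat) (d : R) (z : T).
Hypothesis d_gt0 : 0 < d.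
Hypothesis minor : forall a, minorizes n d a z.

Lemma iter_kapply_contract f lo hi : (forall x, lo <= f x <= hi) ->
  forall a, lo + d * (f z - lo) <= iter n kapply f a <= hi - d * (hi - f z).
Proof.
move=> fb a.
have f_lo x : 0 <= f x - lo by rewrite subr_ge0; case/andP: (fb x).
have f_hi x : 0 <= hi - f x by rewrite subr_ge0; case/andP: (fb x).
have := minor a f_lo; have := minor a f_hi.
rewrite iter_kapply_subr iter_kapply_rsubr /= => ? ?; apply/andP; split; lra.
Qed.

Lemma iter_kapply_oscillation k f lo hi : (forall x, lo <= f x <= hi) ->
  exists lo' hi', (forall a, lo' <= iter (k * n) kapply f a <= hi') /\
    hi' - lo' = (1 - d) ^+ k * (hi - lo).
Proof.
move=> fb; elim: k => [|k [lo' [hi' [Hb Hw]]]].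
  by exists lo, hi; rewrite expr0 mul1r.
exists (lo' + d * (iter (k * n) kapply f z - lo')).
exists (hi' - d * (hi' - iter (k * n) kapply f z)); split.
  by rewrite mulSn iterD; apply: iter_kapply_contract.
by rewrite exprS -mulrA -Hw; ring.
Qed.

Lemma doeblin_cvg_uniform f : (forall x, 0 <= f x) -> \sum_x f x = 1 ->
  forall a, (fun t => iter t kapply f a) @ \oo --> (#|T|%:R : R)^-1.
Proof.
move=> f0 fs a; apply/cvgrPdist_le => eps eps_gt0.
have d_le1 : d <= 1.
  have one_bounds (x : T) : 1 <= (fun=> 1 : R) x <= 1 by rewrite lexx.
  have /andP[_ it1] := iter_kapply_bounds n one_bounds a.
  by have := minor a (fun=> ler01); rewrite mulr1 => /le_trans; apply.
have fb : forall x, 0 <= f x <= 1.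
  move=> x; rewrite f0 -fs (bigD1 x) //= lerDl.
  by apply: sumr_ge0 => y _.
have [k Hk] : exists k, (1 - d) ^+ k <= eps.
  apply: (@exists_expr_le R (1 - d) eps) => //.
  by rewrite subr_ge0 d_le1 gtrDl oppr_lt0 d_gt0.
have [lo [hi [Hb Hw]]] := iter_kapply_oscillation k fb.
exists (k * n)%N => // t /= /subnK <-; rewrite iterD.
have Hbt := iter_kapply_bounds (t - k * n) Hb.
have /andP[avg_lo avg_hi] : lo <= (#|T|%:R)^-1 <= hi.
  apply: card_inv_between Hbt _ _; first by rewrite !sum_iter_kapply.
  by apply/card_gt0P; exists a.
have /andP[lo_t hi_t] := Hbt a.
rewrite subr0 mulr1 in Hw.
rewrite ler_norml; apply/andP; split; lra.
Qed.

End Doeblin.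

Hypothesis K_irr : forall a b, connect kedge a b.

Theorem kapply_cvg_uniform f : (forall x, 0 <= f x) -> \sum_x f x = 1 ->
  forall a, (fun t => iter t kapply f a) @ \oo --> (#|T|%:R : R)^-1.
Proof.
move=> f0 fs a.
have [n [d d_gt0 minor]] := uniform_minorization (fun b => K_irr b a).
exact: (doeblin_cvg_uniform d_gt0 minor f0 fs a).
Qed.

Lemma kapply_fixed_uniform g : kapply g = g -> (forall x, 0 <= g x) ->
  \sum_x g x = 1 -> forall a, g a = (#|T|%:R)^-1.
Proof.
move=> gK g0 gs a.
have iter_g t : iter t kapply g = g by elim: t => [//|t IH]; rewrite iterS IH gK.
have := kapply_cvg_uniform g0 gs a.
under eq_fun do rewrite iter_g.
by move/(cvg_lim (@Rhausdorff R)); rewrite lim_cst.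
Qed.

End StochasticKernel.

Lemma leq_sum1 (V : finType) (f : V -> nat) x : (f x <= \sum_z f z)%N.
Proof. by rewrite (bigD1 x) //= leq_addr. Qed.

Lemma leq_sum_pair (V : finType) (f : V -> nat) x y : x != y ->
  (f x + f y <= \sum_z f z)%N.
Proof.
move=> xy; rewrite (bigD1 x) //= (bigD1 y) /=; last by rewrite eq_sym.
by rewrite addnA leq_addr.
Qed.

Lemma eq_sum_off_pair (V : finType) (f g : V -> nat) x y : x != y ->
  (forall z, z != x -> z != y -> f z = g z) -> (f x + f y = g x + g y)%N ->
  (\sum_z f z = \sum_z g z)%N.
Proof.
move=> xy fg fg_xy; rewrite (bigD1 x) //= (bigD1 y) /= 1?eq_sym //.
rewrite [RHS](bigD1 x) //= [in RHS](bigD1 y) /= 1?eq_sym //.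
rewrite !addnA fg_xy; congr (_ + _)%N; apply: eq_bigr => z /andP[zy zx].
exact: fg.
Qed.

Lemma sum_nat_indicator (R : pzSemiRingType) (c : R) (j s : nat) (P : bool) :
  (P -> (j <= s)%N) ->
  \sum_(0 <= u < s.+1) c * (if (u == j) && P then 1 else 0) = if P then c else 0.
Proof.
case: P => js; last by rewrite big1 // => u _; rewrite andbF mulr0.
have j_in : j \in index_iota 0 s.+1 by rewrite mem_index_iota ltnS js.
rewrite (bigD1_seq j j_in (iota_uniq _ _)) /= eqxx mulr1.
by rewrite big1 ?addr0 // => u /negbTE ->; rewrite mulr0.
Qed.

Section Reshuffling.
Variables (R : realType) (V : finType) (e : rel V) (M : nat).
Hypothesis e_irr : irreflexive e.
Notation C := (config V M).
Notation K := (@reshuffle_kernel R V e M).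

Lemma config_ext (a b : C) : cval a =1 cval b -> a = b.
Proof. by move=> ab; apply/val_inj/ffunP => v; apply/val_inj; exact: ab. Qed.

Lemma sum_cval (a : C) : (\sum_v cval a v)%N = M.
Proof. exact: (eqP (svalP a)). Qed.

(* [a0] is a junk default, returned when [f] does not have total mass [M]. *)
Definition mk_config (a0 : C) (f : V -> nat) : C :=
  insubd a0 [ffun v => inord (f v)].

Lemma cval_mk_config a0 f : (\sum_v f v)%N = M -> cval (mk_config a0 f) =1 f.
Proof.
move=> fM v.
have f_le z : (f z <= M)%N by rewrite -fM leq_sum1.
rewrite /cval /mk_config insubdK ?ffunE ?inordK ?ltnS //.
rewrite /in_mem /=; apply/eqP; rewrite -[RHS]fM; apply: eq_bigr => z _.
by rewrite ffunE inordK // ltnS.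
Qed.

Lemma pile_subproof v0 :
  (\sum_(v : V) ([ffun v => if v == v0 then (ord_max : 'I_M.+1) else ord0] v : nat))%N == M.
Proof.
rewrite (bigD1 v0) //= ffunE eqxx big1 ?addn0 // => v /negbTE vv0.
by rewrite ffunE vv0.
Qed.

Definition pile v0 : C :=
  exist (fun f : {ffun V -> 'I_M.+1} => (\sum_x (f x : nat))%N == M) _ (pile_subproof v0).

Lemma cval_pile v0 v : cval (pile v0) v = if v == v0 then M else 0%N.
Proof. by rewrite /cval /= ffunE; case: eqP. Qed.

Lemma full_pile v0 (a : C) : (M <= cval a v0)%N -> a = pile v0.
Proof.
move=> aM; apply: config_ext => v; rewrite cval_pile; case: eqVneq => [-> | vv0].
  by apply/eqP; rewrite eqn_leq aM andbT; have := leq_sum1 (cval a) v0; rewrite sum_cval.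
have := leq_sum_pair (cval a) vv0; rewrite sum_cval => /leq_trans/(_ aM).
by rewrite -{2}[cval a v0]add0n leq_add2r leqn0 => /eqP.
Qed.

Definition redistributes x y (a b : C) : bool :=
  [forall v, (v != x) && (v != y) ==> (cval b v == cval a v)] &&
  (cval b x + cval b y == cval a x + cval a y)%N.

Lemma redistributesC x y a b : redistributes x y a b = redistributes x y b a.
Proof.
rewrite /redistributes; congr andb; last by rewrite eq_sym.
by apply/forallP/forallP => H v; move: (H v); rewrite (eq_sym (cval a v)).
Qed.

Lemma redistributes_refl x y a : redistributes x y a a.
Proof. by rewrite /redistributes eqxx andbT; apply/forallP => v; rewrite eqxx implybT. Qed.

Lemma upd_redistributes x y u (a b : C) : x != y -> (u <= cval a x + cval a y)%N ->
  [forall v, cval b v == upd (cval a) x y u v] =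
  (u == cval b x) && redistributes x y a b.
Proof.
move=> xy us; apply/forallP/andP => [bu | [/eqP -> /andP[/forallP b_off /eqP b_xy]] v].
  have /eqP bx := bu x; have /eqP by_ := bu y.
  rewrite /upd eqxx in bx; rewrite /upd eq_sym (negbTE xy) eqxx in by_.
  split; first by rewrite bx.
  apply/andP; split; last by rewrite bx by_ subnKC.
  apply/forallP => v; apply/implyP => /andP[vx vy]; have := bu v.
  by rewrite /upd (negbTE vx) (negbTE vy).
rewrite /upd; case: (eqVneq v x) => [-> //|vx].
case: (eqVneq v y) => [->|vy]; first by rewrite -b_xy addKn.
by have := b_off v; rewrite vx vy.
Qed.

Lemma reshuffle_kernelE a b : K a b = (#|edges e|%:R)^-1 *
  \sum_(p in edges e)
    (if redistributes p.1 p.2 a b then ((cval a p.1 + cval a p.2).+1%:R)^-1 else 0).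
Proof.
rewrite /reshuffle_kernel; congr (_ * _); apply: eq_bigr => p; rewrite inE => pe.
have xy : p.1 != p.2 by apply: contraTneq pe => ->; rewrite e_irr.
rewrite -(@sum_nat_indicator _ _ (cval b p.1) (cval a p.1 + cval a p.2)); last first.
  by case/andP => _ /eqP <-; apply: leq_addr.
by apply: eq_big_nat => u /andP[_ us]; rewrite upd_redistributes // -ltnS.
Qed.

Lemma reshuffle_kernelC a b : K a b = K b a.
Proof.
rewrite !reshuffle_kernelE; congr (_ * _); apply: eq_bigr => p _.
by rewrite redistributesC; case: ifP => // /andP[_ /eqP ->].
Qed.

Lemma reshuffle_kernel_ge0 a b : 0 <= K a b.
Proof.
rewrite reshuffle_kernelE mulr_ge0 ?invr_ge0 ?ler0n //.
by apply: sumr_ge0 => p _; case: ifP; rewrite ?invr_ge0 ?ler0n.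
Qed.

Lemma reshuffle_kernel_gt0 p a b :
  p \in edges e -> redistributes p.1 p.2 a b -> 0 < K a b.
Proof.
move=> pe ab; have E_gt0 : (0 < #|edges e|)%N by apply/card_gt0P; exists p.
rewrite reshuffle_kernelE mulr_gt0 ?invr_gt0 ?ltr0n // (bigD1 p) //= ab.
rewrite ltr_wpDr ?invr_gt0 ?ltr0n //.
by apply: sumr_ge0 => q _; case: ifP; rewrite ?invr_ge0 ?ler0n.
Qed.

Lemma sum_upd_indicator (a : C) x y u : x != y -> (u <= cval a x + cval a y)%N ->
  \sum_(b : C) (if [forall v, cval b v == upd (cval a) x y u v] then 1 else 0 : R) = 1.
Proof.
move=> xy us; set g := upd (cval a) x y u.
have gM : (\sum_z g z)%N = M.
  rewrite -(sum_cval a); apply: (eq_sum_off_pair xy).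
    by move=> z zx zy; rewrite /g /upd (negbTE zx) (negbTE zy).
  by rewrite /g /upd eqxx eq_sym (negbTE xy) eqxx subnKC.
rewrite (bigD1 (mk_config a g)) //= ifT; last first.
  by apply/forallP => v; rewrite cval_mk_config.
rewrite big1 ?addr0 // => b /eqP bg; case: ifP => // /forallP bu; case: bg.
by apply: config_ext => v; rewrite cval_mk_config //; apply/eqP.
Qed.

Hypothesis e_conn : connected_graph e.
Hypothesis V_gt1 : (1 < #|V|)%N.

Lemma edges_gt0 : (0 < #|edges e|)%N.
Proof.
have [v [w [_ _ vw]]] := card_gt1P V_gt1.
have /connectP[[|x p] /= vp wl] := e_conn v w; first by rewrite wl eqxx in vw.
by apply/card_gt0P; exists (v, x); rewrite inE; case/andP: vp.
Qed.

Lemma reshuffle_kernel_row1 a : \sum_b K a b = 1.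
Proof.
rewrite /reshuffle_kernel -mulr_sumr exchange_big /= (eq_bigr (fun=> 1)) => [|p].
  by rewrite sumr_const mulVf // pnatr_eq0 -lt0n edges_gt0.
rewrite inE => pe; have xy : p.1 != p.2 by apply: contraTneq pe => ->; rewrite e_irr.
rewrite exchange_big /=; set s := (cval a p.1 + cval a p.2)%N.
rewrite (eq_big_nat _ _ (F2 := fun=> (s.+1%:R)^-1)) => [|u /andP[_ us]].
  by rewrite sumr_const_nat subn0 -[LHS]mulr_natr mulVf // pnatr_eq0.
by rewrite -mulr_sumr sum_upd_indicator ?mulr1 // -ltnS.
Qed.

Lemma reshuffle_kernel_diag_gt0 a : 0 < K a a.
Proof.
have /card_gt0P[p pe] := edges_gt0.
exact: reshuffle_kernel_gt0 pe (redistributes_refl _ _ a).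
Qed.

Notation step := (kedge K).

Definition move_pile (a : C) x y : C := mk_config a (fun z =>
  if z == x then 0%N else if z == y then (cval a y + cval a x)%N else cval a z).

Lemma cval_move_pile (a : C) x y : x != y -> forall z, cval (move_pile a x y) z =
  if z == x then 0%N else if z == y then (cval a y + cval a x)%N else cval a z.
Proof.
move=> xy; apply: cval_mk_config; rewrite -[RHS](sum_cval a).
apply: (eq_sum_off_pair xy) => [z zx zy|]; first by rewrite (negbTE zx) (negbTE zy).
by rewrite eqxx [y == x]eq_sym (negbTE xy) eqxx add0n addnC.
Qed.

Lemma step_move_pile a x y : e x y -> step a (move_pile a x y).
Proof.
move=> xy_edge; have xy : x != y by apply: contraTneq xy_edge => ->; rewrite e_irr.
apply: (@reshuffle_kernel_gt0 (x, y)); first by rewrite inE.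
apply/andP; split.
  apply/forallP => v; apply/implyP => /andP[vx vy].
  by rewrite cval_move_pile // (negbTE vx) (negbTE vy).
by rewrite !cval_move_pile // eqxx [y == x]eq_sym (negbTE xy) eqxx add0n addnC.
Qed.

Lemma move_pile_along_path x p (a : C) : path e x p -> last x p != x ->
  exists2 b, connect step a b & (cval a x + cval a (last x p) <= cval b (last x p))%N.
Proof.
elim: p x a => [|x1 p IH] x a /=; first by rewrite eqxx.
move=> /andP[xx1_edge p_path] lx.
have xx1 : x != x1 by apply: contraTneq xx1_edge => ->; rewrite e_irr.
have a_step := step_move_pile a xx1_edge.
case: (eqVneq (last x1 p) x1) => [-> | lx1].
  exists (move_pile a x x1); first exact: connect1 a_step.
  by rewrite cval_move_pile // [x1 == x]eq_sym (negbTE xx1) eqxx addnC.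
have [b ab b_last] := IH x1 (move_pile a x x1) p_path lx1.
exists b; first exact: connect_trans (connect1 a_step) ab.
move: b_last; rewrite !cval_move_pile // eqxx [x1 == x]eq_sym (negbTE xx1).
rewrite (negbTE lx) (negbTE lx1).
lia.
Qed.

Lemma connect_pile v0 (a : C) : connect step a (pile v0).
Proof.
move: {2}(M - cval a v0)%N (leqnn (M - cval a v0)) => k.
elim: k a => [|k IH] a ak.
  by rewrite (@full_pile v0 a) // -subn_eq0 -leqn0.
have [aM | aM] := leqP M (cval a v0); first by rewrite (full_pile aM).
have [x /andP[xv0 ax_gt0]] : exists x, (x != v0) && (0 < cval a x)%N.
  apply/existsP; apply: contraLR aM => /existsPn ax0.
  have := sum_cval a; rewrite (bigD1 v0) //= big1 ?addn0 => [-> | z zv0].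
    by rewrite ltnn.
  by have := ax0 z; rewrite zv0 lt0n negbK => /eqP.
have /connectP[p xp l_v0] := e_conn x v0.
have x_last : last x p != x by rewrite -l_v0 eq_sym.
have [b ab] := move_pile_along_path a xp x_last.
rewrite -l_v0 => b_v0.
by apply: connect_trans ab (IH b _); lia.
Qed.

Lemma reshuffle_irreducible (a b : C) : connect step a b.
Proof.
have [v0 _] := card_gt1P V_gt1.
have step_sym : symmetric step by move=> c d; rewrite /kedge reshuffle_kernelC.
apply: connect_trans (connect_pile v0 a) _.
by rewrite (sym_connect_sym step_sym) connect_pile.
Qed.

Lemma law_at_iter (eta : C) t :
  @law_at R V e M t eta = iter t (kapply K) (@law_at R V e M 0 eta).
Proof.
elim: t => [//|t IH]; rewrite iterS -IH; apply: funext => xi /=.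
by apply: eq_bigr => a _; rewrite mulrC reshuffle_kernelC.
Qed.

Lemma uniform_stationary :
  @is_stationary R V e M (fun _ : C => (#|(C : finType)|%:R : R)^-1).
Proof.
have [v0 _] := card_gt1P V_gt1.
have C_gt0 : (0 < #|(C : finType)|)%N by apply/card_gt0P; exists (pile v0).
split; first by move=> _; rewrite invr_ge0 ler0n.
split; first by rewrite sumr_const -[LHS]mulr_natr mulVf // pnatr_eq0 -lt0n.
move=> b; rewrite -mulr_sumr (eq_bigr (K b)) ?reshuffle_kernel_row1 ?mulr1 // => a _.
exact: reshuffle_kernelC.
Qed.

Lemma stationary_uniform pi :
  @is_stationary R V e M pi -> pi = fun=> (#|(C : finType)|%:R : R)^-1.
Proof.
move=> [pi_ge0 [pi_sum pi_inv]]; apply: funext => a.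
apply: (kapply_fixed_uniform reshuffle_kernel_ge0 reshuffle_kernel_row1
  reshuffle_kernel_diag_gt0 reshuffle_kernelC reshuffle_irreducible) => //.
apply: funext => b; rewrite -[RHS]pi_inv; apply: eq_bigr => c _.
by rewrite mulrC reshuffle_kernelC.
Qed.

Lemma law_at_cvg_uniform (xi eta : C) :
  (fun t => @law_at R V e M t eta xi) @ \oo --> (#|(C : finType)|%:R : R)^-1.
Proof.
under eq_fun do rewrite law_at_iter.
apply: (kapply_cvg_uniform reshuffle_kernel_ge0 reshuffle_kernel_row1
  reshuffle_kernel_diag_gt0 reshuffle_kernelC reshuffle_irreducible).
  by move=> b /=; case: eqP.
by rewrite (bigD1 eta) //= eqxx big1 ?addr0 // => b /negbTE; rewrite eq_sym => ->.
Qed.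
End Reshuffling.

Theorem lemma1 (R : realType) (V : finType) (e : rel V) (M : nat) :
  simple_graph e -> connected_graph e -> (1 < #|V|)%N ->
  exists pi : config V M -> R,
    [/\ @is_stationary R V e M pi,
        (forall pi' : config V M -> R, @is_stationary R V e M pi' -> pi' = pi) &
        (forall xi eta : config V M,
            (fun t : nat => @law_at R V e M t eta xi) @ \oo --> pi xi)].
Proof.
move=> [_ e_irr] e_conn V_gt1.
exists (fun=> (#|(config V M : finType)|%:R)^-1); split.
- exact: uniform_stationary.
- exact: stationary_uniform.
- exact: law_at_cvg_uniform.
Qed.
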